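(* Let $pu$, $uv$, and $vq$ be three edges of a Euclidean minimum spanning tree of a finite point set in the plane such that $p$ and $q$ lie on the same side of the line through $u$ and $v$. Let $\alpha=\angle puv$ and $\gamma=\angle uvq$ denote the convex angles at $u$ and $v$, respectively. If $\alpha+\gamma\leqslant 210^\circ$, then $|pq|\leqslant\sqrt{3}\cdot\max\{|pu|,|uv|,|vq|\}$.
   Context: $|xy|$ denotes the Euclidean distance between points $x$ and $y$; angles are measured in degrees. *)

From Stdlib Require Import Reals List Relations.
Open Scope R_scope.

Definition point := (R * R)%type.

Definition edist (x y : point) : R :=
  sqrt ((fst x - fst y) ^ 2 + (snd x - snd y) ^ 2).

Definition angle_deg (a b c : point) : R :=
  acos (((fst a - fst b) * (fst c - fst b) + (snd a - snd b) * (snd c - snd b))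
        / (edist a b * edist c b)) * 180 / PI.

Definition orient (u v x : point) : R :=
  (fst v - fst u) * (snd x - snd u) - (snd v - snd u) * (fst x - fst u).

Definition same_side (u v p q : point) : Prop :=
  orient u v p * orient u v q > 0.

(* Graphs on a finite point set S (a duplicate-free list) with edge list E
   of (unordered) straight-line edges. *)
Definition adjacent (E : list (point * point)) (a b : point) : Prop :=
  In (a, b) E \/ In (b, a) E.

Definition simple_edges (S : list point) (E : list (point * point)) : Prop :=
  NoDup E /\
  (forall a b, In (a, b) E -> In a S /\ In b S /\ a <> b /\ ~ In (b, a) E).

Definition connected_on (S : list point) (E : list (point * point)) : Prop :=
  forall a b, In a S -> In b S -> clos_refl_trans point (adjacent E) a b.

Definition spanning_tree (S : list point) (E : list (point * point)) : Prop :=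
  simple_edges S E /\ connected_on S E /\ length E = (length S - 1)%nat.

Definition weight (E : list (point * point)) : R :=
  fold_right (fun e acc => edist (fst e) (snd e) + acc) 0 E.

Definition EMST (S : list point) (T : list (point * point)) : Prop :=
  spanning_tree S T /\ forall T', spanning_tree S T' -> weight T <= weight T'.

(* Put u at the origin and v at (d, 0), with p and q above the axis:
   p = a (cos α, sin α) and q = (d, 0) + b (- cos γ, sin γ), where a = |pu|, d = |uv|,
   b = |vq| are at most L.  Exchanging an edge of the tree shows |pu|, |uv| <= |pv| and
   |uv|, |vq| <= |uq|, i.e. 2 a cos α <= d, 2 d cos α <= a and likewise for b and γ;
   in particular both angles are at least 60°.
   If α + γ <= 180°, both angles lie in [60°, 120°], so cos (α + γ) <= -1/2 and
   a cos α + b cos γ >= - max(a, b) / 2, which gives |pq|² <= d² + L² + d L <= 3 L².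
   If 180° < α + γ <= 210°, |pq|² is a convex quadratic in a and in b separately, so it
   suffices to check a ∈ {max(0, 2 d cos α), L} and b ∈ {max(0, 2 d cos γ), L}; there
   the excess α + γ - 180° <= 30° keeps |pq|² below 3 L². *)

From Stdlib Require Import Reals List Relations Lra Lia Psatz Nsatz Classical.
Open Scope R_scope.

(** * Exchange property of Euclidean minimum spanning trees *)

Local Notation reachable E := (clos_refl_trans point (adjacent E)).

Lemma edist_comm x y : edist x y = edist y x.
Proof. unfold edist; f_equal; ring. Qed.

Lemma adjacent_sym E x y : adjacent E x y -> adjacent E y x.
Proof. unfold adjacent; tauto. Qed.

Lemma adjacent_incl E E' x y : incl E E' -> adjacent E x y -> adjacent E' x y.
Proof. intros HE [H|H]; [left|right]; auto. Qed.

Lemma adjacent_remove E1 e E2 x y :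
  adjacent (E1 ++ e :: E2) x y -> adjacent (E1 ++ E2) x y \/ adjacent (e :: nil) x y.
Proof. unfold adjacent; rewrite !in_app_iff; simpl; intuition. Qed.

Lemma adjacent_single_eq e x y z :
  adjacent (e :: nil) x y -> adjacent (e :: nil) x z -> y = z.
Proof.
  destruct e as [a b]; unfold adjacent; simpl.
  intros [[H|[]]|[H|[]]] [[K|[]]|[K|[]]]; congruence.
Qed.

Lemma incl_remove {A : Type} (l1 l2 : list A) a : incl (l1 ++ l2) (l1 ++ a :: l2).
Proof. apply incl_app_app; [apply incl_refl | apply incl_tl, incl_refl]. Qed.

Lemma reachable_sym E x y : reachable E x y -> reachable E y x.
Proof.
  induction 1; [apply rt_step, adjacent_sym | apply rt_refl | eapply rt_trans]; eauto.
Qed.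

Lemma reachable_mono E E' x y :
  (forall a b, adjacent E a b -> reachable E' a b) -> reachable E x y -> reachable E' x y.
Proof. intros HE; induction 1; [auto | apply rt_refl | eapply rt_trans; eauto]. Qed.

Lemma reachable_nil x y : reachable nil x y -> x = y.
Proof. induction 1 as [x y [[]|[]] | | ]; congruence. Qed.

Lemma reachable_cons a b E x y :
  reachable ((a, b) :: E) x y ->
  reachable E x y \/ ((reachable E x a \/ reachable E x b) /\ (reachable E a y \/ reachable E b y)).
Proof.
  induction 1 as [x y [[H|H]|[H|H]] | x | x y z _ IH1 _ IH2].
  - injection H as -> ->; right; split; [left|right]; apply rt_refl.
  - left; apply rt_step; left; auto.
  - injection H as -> ->; right; split; [right|left]; apply rt_refl.
  - left; apply rt_step; right; auto.
  - left; apply rt_refl.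
  - destruct IH1 as [H1|[Hx Hy]], IH2 as [H2|[Hy' Hz]].
    + left; eapply rt_trans; eauto.
    + right; split; [destruct Hy' as [K|K]; [left|right]; eapply rt_trans; eauto | exact Hz].
    + right; split; [exact Hx | destruct Hy as [K|K]; [left|right]; eapply rt_trans; eauto].
    + right; auto.
Qed.

Lemma length_le_edges_add_roots E : forall (S R : list point),
  NoDup S -> (forall x, In x S -> exists2 r, In r R & reachable E x r) ->
  (length S <= length E + length R)%nat.
Proof.
  induction E as [|[a b] E IH]; intros S R HS HR; simpl.
  - apply NoDup_incl_length; auto.
    intros x Hx; destruct (HR x Hx) as [r Hr Hxr]; apply reachable_nil in Hxr; subst; auto.
  - destruct (classic (exists2 r, In r R & reachable E a r)) as [[ra Hra Ha]|Ha].
    + enough (length S <= length E + length (b :: R))%nat by (simpl in *; lia).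
      apply IH; auto; intros x Hx; destruct (HR x Hx) as [r Hr Hxr].
      destruct (reachable_cons a b E x r Hxr) as [K|[[K|K] _]].
      * exists r; simpl; auto.
      * exists ra; simpl; eauto using rt_trans.
      * exists b; simpl; auto.
    + enough (length S <= length E + length (a :: R))%nat by (simpl in *; lia).
      apply IH; auto; intros x Hx; destruct (HR x Hx) as [r Hr Hxr].
      destruct (reachable_cons a b E x r Hxr) as [K|[[K|K] [K'|K']]].
      * exists r; simpl; auto.
      * exists a; simpl; auto.
      * exists a; simpl; auto.
      * exfalso; apply Ha; eauto.
      * exists r; simpl; eauto using rt_trans.
Qed.

Lemma connected_on_length S E :
  NoDup S -> connected_on S E -> (length S <= length E + 1)%nat.
Proof.
  intros HS HE; destruct S as [|x S]; simpl; [lia|].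
  apply (length_le_edges_add_roots E (x :: S) (x :: nil)); auto.
  intros y Hy; exists x; [left; auto | apply HE; simpl; auto].
Qed.

Lemma spanning_tree_remove_edge S T1 e T2 :
  NoDup S -> spanning_tree S (T1 ++ e :: T2) -> ~ connected_on S (T1 ++ T2).
Proof.
  intros HS [[_ Hsimple] [_ Hlen]] Hconn.
  pose proof (connected_on_length S _ HS Hconn) as Hle.
  destruct e as [a b].
  destruct (Hsimple a b) as [Ha _]; [apply in_or_app; simpl; auto|].
  destruct S; [contradiction|].
  rewrite length_app in Hle, Hlen; simpl in Hle, Hlen; lia.
Qed.

Lemma connected_on_exchange S T1 e T2 E x y :
  connected_on S (T1 ++ e :: T2) -> adjacent (e :: nil) x y ->
  incl (T1 ++ T2) E -> reachable E x y -> connected_on S E.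
Proof.
  intros Hconn He Hincl Hxy a b Ha Hb.
  apply (reachable_mono (T1 ++ e :: T2)); [|auto].
  intros a' b' Hab; destruct (adjacent_remove _ _ _ _ _ Hab) as [K|K].
  - apply rt_step; eapply adjacent_incl; eauto.
  - destruct e as [e1 e2]; destruct He as [[He|[]]|[He|[]]], K as [[K|[]]|[K|[]]];
      rewrite He in K; injection K as -> ->; auto using reachable_sym.
Qed.

Lemma simple_edges_remove S T1 e T2 :
  simple_edges S (T1 ++ e :: T2) -> simple_edges S (T1 ++ T2).
Proof.
  intros [Hnd Hsimple]; split; [eapply NoDup_remove_1; eauto|].
  intros a b Hab; destruct (Hsimple a b) as (Ha & Hb & Hne & Hba); [apply incl_remove; auto|].
  repeat split; auto; intro K; apply Hba, incl_remove; auto.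
Qed.

Lemma simple_edges_cons S E x z :
  simple_edges S E -> In x S -> In z S -> x <> z -> ~ adjacent E x z ->
  simple_edges S ((x, z) :: E).
Proof.
  intros [Hnd Hsimple] Hx Hz Hxz Hadj; split.
  - constructor; auto; intro K; apply Hadj; left; auto.
  - intros a b [K|K].
    + injection K as <- <-; repeat split; auto.
      intros [K|K]; [injection K; auto | apply Hadj; right; auto].
    + destruct (Hsimple a b K) as (Ha & Hb & Hne & Hba); repeat split; auto.
      intros [K'|K']; [injection K' as -> ->; apply Hadj; right; auto | auto].
Qed.

Lemma spanning_tree_exchange S T1 e T2 x z :
  spanning_tree S (T1 ++ e :: T2) -> In x S -> In z S -> x <> z ->
  ~ adjacent (T1 ++ e :: T2) x z -> connected_on S ((x, z) :: T1 ++ T2) ->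
  spanning_tree S ((x, z) :: T1 ++ T2).
Proof.
  intros [Hsimple [_ Hlen]] Hx Hz Hxz Hadj Hconn; split; [|split; [exact Hconn|]].
  - apply simple_edges_cons; auto; [eapply simple_edges_remove; eauto|].
    intro K; apply Hadj; eapply adjacent_incl; [apply incl_remove | exact K].
  - rewrite length_app in Hlen; simpl in *; rewrite length_app; lia.
Qed.

Lemma weight_app l1 l2 : weight (l1 ++ l2) = weight l1 + weight l2.
Proof. induction l1 as [|e l IH]; simpl; [lra | rewrite IH; lra]. Qed.

(* Replacing the edge xy by xz yields a spanning tree, unless xz is already an edge,
   in which case the tree would stay connected without xy. *)
Lemma EMST_adjacent_le S T x y z :
  NoDup S -> EMST S T -> adjacent T x y -> adjacent T y z -> x <> z ->
  edist x y <= edist x z.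
Proof.
  intros HS [HT Hmin] Hxy Hyz Hxz.
  assert (He : exists e, In e T /\ adjacent (e :: nil) x y).
  { destruct Hxy as [H|H]; eexists; (split; [exact H|]); [left|right]; left; auto. }
  destruct He as [e [HeT Hexy]].
  destruct (in_split _ _ HeT) as (T1 & T2 & ->).
  assert (Hends : forall a b, adjacent (T1 ++ e :: T2) a b -> In a S /\ In b S /\ a <> b).
  { intros a b [K|K]; destruct (proj2 (proj1 HT) _ _ K) as (? & ? & ? & _); auto. }
  destruct (Hends x y Hxy) as (Hx & _ & _), (Hends y z Hyz) as (_ & Hz & Hyz_ne).
  assert (Hyz0 : adjacent (T1 ++ T2) y z).
  { destruct (adjacent_remove _ _ _ _ _ Hyz) as [|K]; [assumption|].
    exfalso; apply Hxz; apply adjacent_sym in Hexy; eauto using adjacent_single_eq. }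
  assert (Hswap : forall E, incl (T1 ++ T2) E -> adjacent E x z -> connected_on S E).
  { intros E Hincl HE; apply (connected_on_exchange S T1 e T2 E x y); [apply HT | auto..].
    apply (rt_trans _ _ _ z); apply rt_step; [|apply adjacent_sym; eapply adjacent_incl]; eauto. }
  destruct (classic (adjacent (T1 ++ e :: T2) x z)) as [Hadj|Hadj].
  - exfalso; apply (spanning_tree_remove_edge S T1 e T2 HS HT).
    apply Hswap; [apply incl_refl|].
    destruct (adjacent_remove _ _ _ _ _ Hadj) as [|K]; [assumption|].
    exfalso; apply Hyz_ne; eauto using adjacent_single_eq.
  - assert (HT' : spanning_tree S ((x, z) :: T1 ++ T2)).
    { apply spanning_tree_exchange with e; auto.
      apply Hswap; [intros f Hf; right; auto | left; left; auto]. }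
    pose proof (Hmin _ HT') as Hw; simpl in Hw; rewrite !weight_app in Hw; simpl in Hw.
    assert (edist (fst e) (snd e) = edist x y).
    { destruct e; destruct Hexy as [[K|[]]|[K|[]]]; injection K as -> ->; simpl;
        auto using edist_comm. }
    lra.
Qed.

(** * The estimate in a normalized frame *)

(* |pq|² for u = (0, 0), v = (d, 0), p = a (ca, sa) and q = (d, 0) + b (- cg, sg). *)
Definition closing_side2 (d a ca sa b cg sg : R) : R :=
  (d - a * ca - b * cg) ^ 2 + (a * sa - b * sg) ^ 2.

Lemma closing_side2_sym d a ca sa b cg sg :
  closing_side2 d a ca sa b cg sg = closing_side2 d b cg sg a ca sa.
Proof. unfold closing_side2; ring. Qed.

Lemma closing_side2_expand d a ca sa b cg sg :
  ca ^ 2 + sa ^ 2 = 1 -> cg ^ 2 + sg ^ 2 = 1 ->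
  closing_side2 d a ca sa b cg sg
  = d ^ 2 + a ^ 2 + b ^ 2 - 2 * d * (a * ca + b * cg) - 2 * a * b * (sa * sg - ca * cg).
Proof. unfold closing_side2; intros; cbn [pow] in *; nsatz. Qed.

Lemma quadratic_le_endpoints (A B C t0 t t1 M : R) :
  0 <= A -> t0 <= t <= t1 ->
  A * t0 ^ 2 + B * t0 + C <= M -> A * t1 ^ 2 + B * t1 + C <= M ->
  A * t ^ 2 + B * t + C <= M.
Proof.
  intros HA Ht H0 H1.
  assert (Hconv : (t1 - t0) * (A * t ^ 2 + B * t + C)
     = (t1 - t) * (A * t0 ^ 2 + B * t0 + C) + (t - t0) * (A * t1 ^ 2 + B * t1 + C)
       - A * (t - t0) * (t1 - t) * (t1 - t0)) by ring.
  destruct (Req_dec t0 t1) as [<-|Hne].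
  - replace t with t0 by lra; lra.
  - assert (0 <= A * (t - t0) * (t1 - t) * (t1 - t0)) by (repeat apply Rmult_le_pos; lra).
    nra.
Qed.

Lemma closing_side2_convex d a0 a a1 ca sa b cg sg M :
  a0 <= a <= a1 ->
  closing_side2 d a0 ca sa b cg sg <= M -> closing_side2 d a1 ca sa b cg sg <= M ->
  closing_side2 d a ca sa b cg sg <= M.
Proof.
  assert (Hq : forall x, closing_side2 d x ca sa b cg sg
    = (ca ^ 2 + sa ^ 2) * x ^ 2 + (2 * (b * cg - d) * ca - 2 * b * sg * sa) * x
      + ((d - b * cg) ^ 2 + (b * sg) ^ 2)).
  { intro x; unfold closing_side2; ring. }
  rewrite !Hq. apply quadratic_le_endpoints. nra.
Qed.

Lemma cos_le_half_of_isosceles a d c :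
  0 < a -> 0 < d -> 2 * a * c <= d -> 2 * d * c <= a -> c <= 1 / 2.
Proof. intros. destruct (Rle_dec c (1 / 2)); [auto | nra]. Qed.

Section Quadrilateral.

Variables d L : R.
Hypotheses (Hd : 0 < d) (HdL : d <= L).

Lemma closing_side2_le_small_sum a ca sa b cg sg :
  0 < a <= b -> b <= L ->
  ca ^ 2 + sa ^ 2 = 1 -> cg ^ 2 + sg ^ 2 = 1 -> 0 < sa -> 0 < sg ->
  ca <= 1 / 2 -> cg <= 1 / 2 -> 0 <= sa * cg + ca * sg ->
  closing_side2 d a ca sa b cg sg <= 3 * L ^ 2.
Proof.
  intros [Ha Hab] HbL Ua Ug Sa Sg Ca Cg Hsin.
  assert (Hsum : 0 <= ca + cg).
  { (* (cos α + cos γ) (1 - cos (α + γ)) = (sin α + sin γ) sin (α + γ) *)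
    assert (Hid : (ca + cg) * (1 - ca * cg + sa * sg) = (sa + sg) * (sa * cg + ca * sg))
      by (clear - Ua Ug; cbn [pow] in *; nsatz).
    assert (ca * cg <= 1) by (pose proof (pow2_ge_0 (ca - cg)); nra).
    assert (0 < 1 - ca * cg + sa * sg) by nra.
    assert (0 <= (sa + sg) * (sa * cg + ca * sg)) by (apply Rmult_le_pos; lra).
    nra. }
  assert (Hcos : 1 / 2 <= sa * sg - ca * cg).
  { assert (ca ^ 2 <= 1 / 4) by nra. assert (cg ^ 2 <= 1 / 4) by nra.
    assert (9 / 16 <= (sa * sg) ^ 2).
    { rewrite Rpow_mult_distr.
      assert (3 / 4 <= sa ^ 2) by lra. assert (3 / 4 <= sg ^ 2) by lra. nra. }
    assert (3 / 4 <= sa * sg) by nra.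
    nra. }
  rewrite closing_side2_expand by assumption.
  assert (a * b <= 2 * a * b * (sa * sg - ca * cg)) by (assert (0 < a * b) by nra; nra).
  assert (a ^ 2 - a * b <= 0) by nra.
  assert (b ^ 2 <= L ^ 2) by nra.
  assert (- (a * ca + b * cg) <= L / 2) by nra.
  assert (d ^ 2 <= L ^ 2) by nra.
  nra.
Qed.

Section LargeSum.

Variables ca sa cg sg : R.
Hypotheses (Ua : ca ^ 2 + sa ^ 2 = 1) (Ug : cg ^ 2 + sg ^ 2 = 1).
Hypotheses (Hcos : sqrt 3 / 2 <= sa * sg - ca * cg) (Hsin : sa * cg + ca * sg < 0).

(* Cosine and sine of the excess α + γ - 180°. *)
Let g := sa * sg - ca * cg.
Let h := - (sa * cg + ca * sg).

Lemma excess_sin_bounds : 0 < h <= 1 / 2.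
Proof.
  assert (Hgh : g ^ 2 + h ^ 2 = 1) by (clear - Ua Ug; unfold g, h; cbn [pow] in *; nsatz).
  assert (sqrt 3 ^ 2 = 3) by (apply pow2_sqrt; lra).
  assert (0 < sqrt 3) by (apply sqrt_lt_R0; lra).
  unfold h in *; split; nra.
Qed.

Lemma excess_cos_a : ca = - g * cg - h * sg.
Proof. clear - Ua Ug; unfold g, h; cbn [pow] in *; nsatz. Qed.

Lemma excess_cos_pos : 0 < g.
Proof. assert (0 < sqrt 3) by (apply sqrt_lt_R0; lra). unfold g; lra. Qed.

Lemma closing_side2_le_large_sum_low x :
  0 <= x <= L -> closing_side2 d x ca sa (Rmax 0 (2 * d * cg)) cg sg <= 3 * L ^ 2.
Proof.
  intros Hx. rewrite closing_side2_expand by assumption.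
  pose proof excess_sin_bounds as Hh. pose proof excess_cos_a as Hca.
  pose proof excess_cos_pos as Hg.
  assert (h * sg <= h) by nra.
  assert (Hbound : forall c, - 1 / 2 <= c -> d ^ 2 + x ^ 2 - 2 * d * x * c <= 3 * L ^ 2).
  { intros c Hc. assert (0 <= d * x) by nra. assert (d * x <= L ^ 2) by nra. nra. }
  destruct (Rle_dec cg 0) as [Hc|Hc].
  - rewrite Rmax_left by nra.
    assert (0 <= - g * cg) by nra.
    replace (d ^ 2 + x ^ 2 + 0 ^ 2 - 2 * d * (x * ca + 0 * cg) - 2 * x * 0 * (sa * sg - ca * cg))
      with (d ^ 2 + x ^ 2 - 2 * d * x * ca) by ring.
    apply Hbound; lra.
  - rewrite Rmax_right by nra.
    assert (0 <= g * cg) by nra.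
    replace (d ^ 2 + x ^ 2 + (2 * d * cg) ^ 2 - 2 * d * (x * ca + 2 * d * cg * cg) -
             2 * x * (2 * d * cg) * (sa * sg - ca * cg))
      with (d ^ 2 + x ^ 2 - 2 * d * x * (ca + 2 * g * cg)) by (unfold g; ring).
    apply Hbound; lra.
Qed.

Lemma closing_side2_le_large_sum_top : closing_side2 d L ca sa L cg sg <= 3 * L ^ 2.
Proof.
  rewrite closing_side2_expand by assumption.
  assert (Hdir : (ca + cg) ^ 2 + (sa - sg) ^ 2 = 2 - 2 * g)
    by (clear - Ua Ug; unfold g; cbn [pow] in *; nsatz).
  assert (sqrt 3 ^ 2 = 3) by (apply pow2_sqrt; lra).
  assert (3 / 2 <= sqrt 3) by (pose proof (sqrt_pos 3); nra).
  assert (- 2 * d * L * (ca + cg) <= d ^ 2 / 2 + 2 * L ^ 2 * (ca + cg) ^ 2)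
    by (pose proof (pow2_ge_0 (d + 2 * L * (ca + cg))); nra).
  assert (0 <= (sa - sg) ^ 2) by apply pow2_ge_0.
  assert (d ^ 2 <= L ^ 2) by nra.
  replace (sa * sg - ca * cg) with g by reflexivity.
  nra.
Qed.

End LargeSum.

Lemma closing_side2_le_large_sum a ca sa b cg sg :
  0 < a <= L -> 0 < b <= L -> 2 * d * ca <= a -> 2 * d * cg <= b ->
  ca ^ 2 + sa ^ 2 = 1 -> cg ^ 2 + sg ^ 2 = 1 ->
  sqrt 3 / 2 <= sa * sg - ca * cg -> sa * cg + ca * sg < 0 ->
  closing_side2 d a ca sa b cg sg <= 3 * L ^ 2.
Proof.
  intros Ha Hb Ca Cg Ua Ug Hcos Hsin.
  assert (Hcos' : sqrt 3 / 2 <= sg * sa - cg * ca) by lra.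
  assert (Hsin' : sg * ca + cg * sa < 0) by lra.
  assert (HaL : closing_side2 d a ca sa L cg sg <= 3 * L ^ 2).
  { apply (closing_side2_convex _ (Rmax 0 (2 * d * ca)) _ L).
    - split; [apply Rmax_lub|]; lra.
    - rewrite closing_side2_sym.
      apply closing_side2_le_large_sum_low; auto; lra.
    - apply closing_side2_le_large_sum_top; auto. }
  rewrite closing_side2_sym.
  apply (closing_side2_convex _ (Rmax 0 (2 * d * cg)) _ L).
  - split; [apply Rmax_lub|]; lra.
  - rewrite closing_side2_sym.
    apply closing_side2_le_large_sum_low; auto; lra.
  - rewrite closing_side2_sym; exact HaL.
Qed.

Lemma closing_side2_le a ca sa b cg sg :
  0 < a <= L -> 0 < b <= L ->
  ca ^ 2 + sa ^ 2 = 1 -> cg ^ 2 + sg ^ 2 = 1 -> 0 < sa -> 0 < sg ->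
  2 * a * ca <= d -> 2 * d * ca <= a -> 2 * b * cg <= d -> 2 * d * cg <= b ->
  0 <= sa * cg + ca * sg \/ sqrt 3 / 2 <= sa * sg - ca * cg ->
  closing_side2 d a ca sa b cg sg <= 3 * L ^ 2.
Proof.
  intros Ha Hb Ua Ug Sa Sg Ca1 Ca2 Cg1 Cg2 Hangle.
  pose proof (cos_le_half_of_isosceles a d ca (proj1 Ha) Hd Ca1 Ca2).
  pose proof (cos_le_half_of_isosceles b d cg (proj1 Hb) Hd Cg1 Cg2).
  destruct (Rle_dec 0 (sa * cg + ca * sg)) as [Hsin|Hsin].
  - destruct (Rle_dec a b).
    + apply closing_side2_le_small_sum; auto; lra.
    + rewrite closing_side2_sym; apply closing_side2_le_small_sum; auto; lra.
  - destruct Hangle as [|Hcos]; [contradiction|].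
    apply closing_side2_le_large_sum; auto; lra.
Qed.

End Quadrilateral.

(** * Reduction to the normalized frame *)

Lemma acos_unit c s : c ^ 2 + s ^ 2 = 1 -> 0 <= s -> cos (acos c) = c /\ sin (acos c) = s.
Proof.
  intros Hu Hs; assert (-1 <= c <= 1) by nra.
  split; [apply cos_acos; auto|].
  rewrite sin_acos by auto.
  replace (1 - c²) with (s ^ 2) by (unfold Rsqr; lra).
  apply sqrt_pow2; auto.
Qed.

Lemma acos_add_le_cases ca sa cg sg :
  ca ^ 2 + sa ^ 2 = 1 -> cg ^ 2 + sg ^ 2 = 1 -> 0 <= sa -> 0 <= sg ->
  acos ca + acos cg <= 7 * PI / 6 ->
  0 <= sa * cg + ca * sg \/ sqrt 3 / 2 <= sa * sg - ca * cg.
Proof.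
  intros Ua Ug Sa Sg Hsum.
  destruct (acos_unit ca sa Ua Sa) as [Hca Hsa], (acos_unit cg sg Ug Sg) as [Hcg Hsg].
  assert (Ha := acos_bound ca); assert (Hg := acos_bound cg).
  destruct (Rle_dec (acos ca + acos cg) PI) as [Hle|Hgt].
  - left; rewrite <- Hca, <- Hsa, <- Hcg, <- Hsg, <- sin_plus.
    apply sin_ge_0; lra.
  - right; rewrite <- Hca, <- Hsa, <- Hcg, <- Hsg, <- cos_PI6.
    replace (sin (acos ca) * sin (acos cg) - cos (acos ca) * cos (acos cg))
      with (cos (acos ca + acos cg - PI))
      by (rewrite cos_minus, cos_PI, sin_PI, cos_plus; ring).
    pose proof PI_RGT_0.
    destruct (Req_dec (acos ca + acos cg - PI) (PI / 6)) as [->|Hne]; [lra|].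
    apply Rlt_le, cos_decreasing_1; lra.
Qed.

Definition edist2 (x y : point) : R := (fst x - fst y) ^ 2 + (snd x - snd y) ^ 2.

Definition inner (o x y : point) : R :=
  (fst x - fst o) * (fst y - fst o) + (snd x - snd o) * (snd y - snd o).

Lemma inner_comm o x y : inner o x y = inner o y x.
Proof. unfold inner; ring. Qed.

Lemma edist2_ge0 x y : 0 <= edist2 x y.
Proof. unfold edist2; apply Rplus_le_le_0_compat; apply pow2_ge_0. Qed.

Lemma edist_sqr x y : edist x y ^ 2 = edist2 x y.
Proof. apply pow2_sqrt, edist2_ge0. Qed.

Lemma edist2_comm x y : edist2 x y = edist2 y x.
Proof. unfold edist2; ring. Qed.

Lemma edist2_le x y z w : edist x y <= edist z w -> edist2 x y <= edist2 z w.
Proof. intro H; apply sqrt_le_0; auto using edist2_ge0. Qed.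

Lemma law_of_cosines o x y : edist2 x y = edist2 o x + edist2 o y - 2 * inner o x y.
Proof. unfold edist2, inner; ring. Qed.

Lemma lagrange_identity o x y :
  inner o x y ^ 2 + orient o x y ^ 2 = edist2 o x * edist2 o y.
Proof. unfold edist2, inner, orient; ring. Qed.

Lemma orient_ne0_edist2_pos u v x :
  orient u v x <> 0 -> 0 < edist2 u v /\ 0 < edist2 u x /\ 0 < edist2 v x.
Proof.
  intro H; assert (0 < orient u v x ^ 2) by (rewrite <- Rsqr_pow2; apply Rsqr_pos_lt; auto).
  pose proof (lagrange_identity u v x) as Hu; pose proof (lagrange_identity v x u) as Hv.
  replace (orient v x u) with (orient u v x) in Hv by (unfold orient; ring).
  rewrite (edist2_comm v u) in Hv.
  pose proof (pow2_ge_0 (inner u v x)); pose proof (pow2_ge_0 (inner v x u)).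
  pose proof (edist2_ge0 u v); pose proof (edist2_ge0 u x); pose proof (edist2_ge0 v x).
  repeat split; nra.
Qed.

Lemma edist_pos_of_edist2 x y : 0 < edist2 x y -> 0 < edist x y.
Proof. apply sqrt_lt_R0. Qed.

Lemma edist2_pos_neq x y : 0 < edist2 x y -> x <> y.
Proof. intros H ->; unfold edist2 in H; rewrite !Rminus_diag in H; simpl in H; lra. Qed.

Lemma same_side_orient_ne0 u v p q :
  same_side u v p q -> orient u v p <> 0 /\ orient u v q <> 0.
Proof. unfold same_side; intro H; split; intro K; rewrite K in H; lra. Qed.

Lemma polar_of_orient o x y sgn :
  sgn ^ 2 = 1 -> 0 < sgn * orient o x y ->
  exists c s, c ^ 2 + s ^ 2 = 1 /\ 0 < s /\
    inner o x y = edist o x * edist o y * c /\ sgn * orient o x y = edist o x * edist o y * s.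
Proof.
  intros Hsgn Hpos.
  assert (Hne : orient o x y <> 0) by (intro K; rewrite K in Hpos; lra).
  destruct (orient_ne0_edist2_pos o x y Hne) as (Hx & Hy & _).
  apply edist_pos_of_edist2 in Hx, Hy.
  exists (inner o x y / (edist o x * edist o y)), (sgn * orient o x y / (edist o x * edist o y)).
  repeat split; try (field; lra).
  - replace ((inner o x y / (edist o x * edist o y)) ^ 2
             + (sgn * orient o x y / (edist o x * edist o y)) ^ 2)
      with ((inner o x y ^ 2 + sgn ^ 2 * orient o x y ^ 2) / (edist o x ^ 2 * edist o y ^ 2))
      by (field; lra).
    rewrite Hsgn, Rmult_1_l, lagrange_identity, !edist_sqr.
    field; rewrite <- !edist_sqr; split; apply pow_nonzero; lra.
  - apply Rdiv_lt_0_compat; auto.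
    apply Rmult_lt_0_compat; auto.
Qed.

Lemma same_side_sign u v p q :
  same_side u v p q -> exists sgn, sgn ^ 2 = 1 /\ 0 < sgn * orient u v p /\ 0 < sgn * orient u v q.
Proof.
  unfold same_side; intro H.
  destruct (Rtotal_order (orient u v p) 0) as [Hp|[Hp|Hp]].
  - exists (-1); split; [ring | split; nra].
  - rewrite Hp in H; lra.
  - exists 1; split; [ring | split; nra].
Qed.

Lemma closing_side2_frame p u v q :
  same_side u v p q ->
  exists ca sa cg sg,
    ca ^ 2 + sa ^ 2 = 1 /\ cg ^ 2 + sg ^ 2 = 1 /\ 0 < sa /\ 0 < sg /\
    inner u v p = edist u v * edist u p * ca /\ inner v u q = edist v u * edist v q * cg /\
    edist2 p q = closing_side2 (edist u v) (edist u p) ca sa (edist v q) cg sg.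
Proof.
  intro Hside.
  destruct (same_side_sign u v p q Hside) as (sgn & Hsgn & Hp & Hq).
  assert (Hvu : orient v u q = - orient u v q) by (unfold orient; ring).
  destruct (polar_of_orient u v p sgn Hsgn Hp) as (ca & sa & Ua & Sa & Ica & Osa).
  destruct (polar_of_orient v u q (- sgn)) as (cg & sg & Ug & Sg & Icg & Osg);
    [lra | rewrite Hvu; lra |].
  exists ca, sa, cg, sg; repeat split; auto.
  assert (Hd : 0 < edist u v).
  { apply edist_pos_of_edist2, (orient_ne0_edist2_pos u v p).
    intro K; rewrite K in Hp; lra. }
  apply (Rmult_eq_reg_l (edist u v ^ 2)); [|apply pow_nonzero; lra].
  rewrite edist_sqr.
  transitivity ((edist2 u v - inner v u q - inner u v p) ^ 2
                + (sgn * orient u v q - sgn * orient u v p) ^ 2).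
  - replace ((sgn * orient u v q - sgn * orient u v p) ^ 2)
      with (sgn ^ 2 * (orient u v q - orient u v p) ^ 2) by ring.
    rewrite Hsgn; unfold edist2, inner, orient; ring.
  - replace (sgn * orient u v q) with (- sgn * orient v u q) by (rewrite Hvu; ring).
    rewrite Ica, Icg, Osa, Osg, (edist_comm v u), <- edist_sqr.
    unfold closing_side2; ring.
Qed.

Lemma isosceles_bound x y z c :
  0 < edist y x -> 0 < edist y z ->
  inner y x z = edist y x * edist y z * c ->
  edist x y <= edist x z -> 2 * edist y x * c <= edist y z.
Proof.
  intros Hx Hz Hc Hle.
  apply edist2_le in Hle.
  rewrite (law_of_cosines y x z), Hc, (edist2_comm x y), <- !edist_sqr in Hle.
  nra.
Qed.

Lemma angle_deg_cos x y z c :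
  0 < edist y x -> 0 < edist y z -> inner y x z = edist y x * edist y z * c ->
  angle_deg x y z = acos c * 180 / PI.
Proof.
  intros Hx Hz Hc; unfold angle_deg.
  change (_ * _ + _ * _) with (inner y x z).
  rewrite Hc, (edist_comm x y), (edist_comm z y).
  replace (edist y x * edist y z * c / (edist y x * edist y z)) with c by (field; lra).
  reflexivity.
Qed.

Lemma pq_le_sqrt3_max p u v q M :
  edist p u <= edist p v -> edist v u <= edist v p ->
  edist u v <= edist u q -> edist q v <= edist q u ->
  same_side u v p q -> angle_deg p u v + angle_deg u v q <= 210 ->
  edist p u <= M -> edist u v <= M -> edist v q <= M ->
  edist p q <= sqrt 3 * M.
Proof.
  intros Hp1 Hp2 Hq1 Hq2 Hside Hangle HaM HdM HbM.
  destruct (closing_side2_frame p u v q Hside)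
    as (ca & sa & cg & sg & Ua & Ug & Sa & Sg & Ica & Icg & Hpq).
  destruct (same_side_orient_ne0 u v p q Hside) as [Hp Hq].
  destruct (orient_ne0_edist2_pos u v p Hp) as (Hd & Ha & _).
  destruct (orient_ne0_edist2_pos u v q Hq) as (_ & _ & Hb).
  apply edist_pos_of_edist2 in Hd, Ha, Hb.
  assert (Hd' : 0 < edist v u) by (rewrite edist_comm; exact Hd).
  assert (Ica' : inner u p v = edist u p * edist u v * ca) by (rewrite inner_comm, Ica; ring).
  assert (Icg' : inner v q u = edist v q * edist v u * cg) by (rewrite inner_comm, Icg; ring).
  pose proof (isosceles_bound p u v ca Ha Hd Ica' Hp1).
  pose proof (isosceles_bound v u p ca Hd Ha Ica Hp2).
  pose proof (isosceles_bound q v u cg Hb Hd' Icg' Hq2).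
  pose proof (isosceles_bound u v q cg Hd' Hb Icg Hq1).
  rewrite (angle_deg_cos p u v ca Ha Hd Ica'), (angle_deg_cos u v q cg Hd' Hb Icg) in Hangle.
  assert (Hsum : acos ca + acos cg <= 7 * PI / 6).
  { pose proof PI_RGT_0.
    apply (Rmult_le_reg_r (180 / PI)); [apply Rdiv_lt_0_compat; lra|].
    replace (7 * PI / 6 * (180 / PI)) with 210 by (field; lra); lra. }
  rewrite (edist_comm v u) in *; rewrite (edist_comm p u) in HaM.
  assert (Hle : edist2 p q <= 3 * M ^ 2).
  { rewrite Hpq; apply closing_side2_le; auto; try lra.
    apply acos_add_le_cases; auto; lra. }
  rewrite <- (sqrt_pow2 M), <- sqrt_mult by (try apply pow2_ge_0; lra).
  apply sqrt_le_1_alt; exact Hle.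
Qed.

Theorem theorem2 (S : list point) (T : list (point * point)) (p u v q : point) :
  NoDup S ->
  EMST S T ->
  adjacent T p u -> adjacent T u v -> adjacent T v q ->
  same_side u v p q ->
  angle_deg p u v + angle_deg u v q <= 210 ->
  edist p q <= sqrt 3 * Rmax (edist p u) (Rmax (edist u v) (edist v q)).
Proof.
  intros HS HT Hpu Huv Hvq Hside Hangle.
  destruct (same_side_orient_ne0 u v p q Hside) as [Hp Hq].
  destruct (orient_ne0_edist2_pos u v p Hp) as (_ & _ & Hpv).
  destruct (orient_ne0_edist2_pos u v q Hq) as (_ & Huq & _).
  apply edist2_pos_neq in Hpv, Huq.
  apply (pq_le_sqrt3_max p u v q); auto.
  - apply (EMST_adjacent_le S T p u v); auto.
  - apply (EMST_adjacent_le S T v u p); auto using adjacent_sym.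
  - apply (EMST_adjacent_le S T u v q); auto.
  - apply (EMST_adjacent_le S T q v u); auto using adjacent_sym.
  - apply Rmax_l.
  - eapply Rle_trans; [apply Rmax_l | apply Rmax_r].
  - eapply Rle_trans; [apply Rmax_r | apply Rmax_r].
Qed.
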